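(* Let $L$ be a (right) Leibniz algebra and $B$ an ideal of $L$. For every integer $n\geq 1$, $B^n\subseteq {}^{n}B+\mathrm{Es}(B)$.
   Context: $F$ is a field of characteristic different from $2$ and all algebras are finite-dimensional over $F$. A (right) Leibniz algebra is an $F$-vector space $L$ with a bilinear product $(x,y)\mapsto xy$ satisfying $x(yz)=(xy)z-(xz)y$ for all $x,y,z\in L$. For subspaces $U,V\subseteq L$, $UV$ denotes the linear span of all $uv$ with $u\in U$, $v\in V$. An ideal of $L$ is a subspace $B$ with $LB\subseteq B$ and $BL\subseteq B$. Right powers: $B^1=B$, $B^{n+1}=B^nB$. Left powers: ${}^1B=B$, ${}^{n+1}B=B\,({}^{n}B)$. $\mathrm{Ess}(L)$ is the ideal generated by all squares $xx$ ($x\in L$) and $\mathrm{Es}(B)=B\cap\mathrm{Ess}(L)$. *)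

From HB Require Import structures.
From mathcomp Require Import all_boot all_order all_algebra.
Set Implicit Arguments. Unset Strict Implicit. Unset Printing Implicit Defensive.
Import GRing.Theory.
Local Open Scope ring_scope.

Section LeibnizDefs.
Variables (F : fieldType) (L : lmodType F) (mul : L -> L -> L).

Inductive span (S : L -> Prop) : L -> Prop :=
  | span_gen x : S x -> span S x
  | span0 : span S 0
  | spanD x y : span S x -> span S y -> span S (x + y)
  | spanZ (a : F) x : span S x -> span S (a *: x).

Definition is_subspace (U : L -> Prop) : Prop :=
  [/\ U 0, (forall x y, U x -> U y -> U (x + y)) & (forall (a : F) x, U x -> U (a *: x))].

Definition sprod (U V : L -> Prop) : L -> Prop :=
  span (fun x => exists u v, [/\ U u, V v & x = mul u v]).

Definition ssum (U V : L -> Prop) : L -> Prop :=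
  fun x => exists u v, [/\ U u, V v & x = u + v].

Definition is_ideal (B : L -> Prop) : Prop :=
  [/\ is_subspace B, (forall x b, B b -> B (mul x b)) & (forall x b, B b -> B (mul b x))].

(* Right powers: rpow B n = B^n for n >= 1 (rpow B 0 := B by convention). *)
Fixpoint rpow (B : L -> Prop) (n : nat) : L -> Prop :=
  match n with
  | 0 => B
  | S m => match m with 0 => B | _ => sprod (rpow B m) B end
  end.

(* Left powers: lpow B n = ^n B for n >= 1 (lpow B 0 := B by convention). *)
Fixpoint lpow (B : L -> Prop) (n : nat) : L -> Prop :=
  match n with
  | 0 => B
  | S m => match m with 0 => B | _ => sprod B (lpow B m) end
  end.

Inductive Ess : L -> Prop :=
  | Ess_sq x : Ess (mul x x)
  | Ess0 : Ess 0
  | EssD x y : Ess x -> Ess y -> Ess (x + y)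
  | EssZ (a : F) x : Ess x -> Ess (a *: x)
  | EssMl x y : Ess y -> Ess (mul x y)
  | EssMr x y : Ess x -> Ess (mul x y).

Definition Es (B : L -> Prop) : L -> Prop := fun x => B x /\ Ess x.

End LeibnizDefs.

From Pilot Require Import Defs.
From HB Require Import structures.
From mathcomp Require Import all_boot all_order all_algebra.
Set Implicit Arguments. Unset Strict Implicit. Unset Printing Implicit Defensive.
Import GRing.Theory.
Local Open Scope ring_scope.

(* A generator u v of B^(n+1) has u = w + e with w in ^nB and
   e in Es(B).  Then e v lies in Es(B), and w v = - v w + (w v + v w), where
   v w lies in ^(n+1)B and the symmetrized product
   w v + v w = (w + v)(w + v) - w w - v v lies in B and in Ess(L). *)

Section SubspaceFacts.
Variables (F : fieldType) (L : lmodType F).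

Lemma span_sub_subspace (S U : L -> Prop) :
  is_subspace U -> (forall x, S x -> U x) -> forall x, Defs.span S x -> U x.
Proof.
move=> [U0 UD UZ] SU x; elim=> [y /SU | | y z _ Uy _ Uz | a y _ Uy] //.
- exact: UD.
- exact: UZ.
Qed.

Lemma span_subspace (S : L -> Prop) : is_subspace (Defs.span S).
Proof. by split; [exact: span0 | exact: spanD | exact: spanZ]. Qed.

Lemma ssum_subspace (U V : L -> Prop) :
  is_subspace U -> is_subspace V -> is_subspace (ssum U V).
Proof.
move=> [U0 UD UZ] [V0 VD VZ]; split.
- by exists 0, 0; rewrite addr0.
- move=> _ _ [u1 [v1 [Uu1 Vv1 ->]]] [u2 [v2 [Uu2 Vv2 ->]]].
  by exists (u1 + u2), (v1 + v2); rewrite addrACA; split; [exact: UD | exact: VD |].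
- move=> a _ [u [v [Uu Vv ->]]].
  by exists (a *: u), (a *: v); rewrite scalerDr; split; [exact: UZ | exact: VZ |].
Qed.

End SubspaceFacts.

Section BilinearProducts.
Variables (F : fieldType) (L : lmodType F) (mul : L -> L -> L).
Hypothesis mul_linl : forall z (a : F) x y, mul (a *: x + y) z = a *: mul x z + mul y z.
Hypothesis mul_linr : forall x (a : F) y z, mul x (a *: y + z) = a *: mul x y + mul x z.

Lemma mulDl x y z : mul (x + y) z = mul x z + mul y z.
Proof. by have := mul_linl z 1 x y; rewrite !scale1r. Qed.

Lemma mulDr x y z : mul x (y + z) = mul x y + mul x z.
Proof. by have := mul_linr x 1 y z; rewrite !scale1r. Qed.

Lemma mul_symE x y : mul x y + mul y x = mul (x + y) (x + y) - mul x x - mul y y.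
Proof.
rewrite mulDl !mulDr [mul x x + _]addrC addrACA.
by rewrite -[_ - mul x x - _]addrA -opprD addrK.
Qed.

Lemma Ess_mul_sym x y : Ess mul (mul x y + mul y x).
Proof.
rewrite mul_symE -!scaleN1r.
by apply/EssD/EssZ/Ess_sq; apply/EssD/EssZ/Ess_sq; apply: Ess_sq.
Qed.

Variable B : L -> Prop.
Hypothesis hB : is_ideal mul B.

Lemma Es_subspace : is_subspace (Es mul B).
Proof.
have [[B0 BD BZ] _ _] := hB.
split; first by split; [exact: B0 | exact: Ess0].
- by move=> x y [Bx Ex] [By Ey]; split; [exact: BD | exact: EssD].
- by move=> a x [Bx Ex]; split; [exact: BZ | exact: EssZ].
Qed.

Lemma Es_mulr e v : Es mul B e -> Es mul B (mul e v).
Proof. by have [_ _ Br] := hB; move=> [Be Ee]; split; [exact: Br | exact: EssMr]. Qed.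

Lemma lpowS_subspace m : is_subspace (lpow mul B m.+1).
Proof. by have [BS _ _] := hB; case: m => [|m] //; exact: span_subspace. Qed.

Lemma lpowS_sub m x : lpow mul B m.+1 x -> B x.
Proof.
have [BS _ Br] := hB; case: m => [//|m].
by apply: span_sub_subspace => // _ [u [v [Bu _ ->]]]; exact: Br.
Qed.

Lemma mul_lpow_ideal m w v : lpow mul B m.+1 w -> B v ->
  ssum (lpow mul B m.+2) (Es mul B) (mul w v).
Proof.
have [[_ BD _] Bl Br] := hB; move=> lw Bv; have Bw := lpowS_sub lw.
exists (- mul v w), (mul w v + mul v w); split.
- by rewrite -scaleN1r; apply/spanZ/span_gen; exists v, w.
- by split; [apply: BD; [exact: Br | exact: Bl] | exact: Ess_mul_sym].
- by rewrite addrCA addNr addr0.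
Qed.

Lemma rpow_sub_lpow_Es m x :
  rpow mul B m.+1 x -> ssum (lpow mul B m.+1) (Es mul B) x.
Proof.
have [[B0 _ _] _ _] := hB.
elim: m x => [|m IH] x.
  by move=> Bx; exists x, 0; rewrite addr0; split=> //; split; [exact: B0 | exact: Ess0].
have sumS := ssum_subspace (lpowS_subspace m.+1) Es_subspace.
move: x; apply: span_sub_subspace => // _ [u [v [Bu Bv ->]]].
have [w [e [lw Ee ->]]] := IH u Bu.
rewrite mulDl; have [w' [e' [lw' Ee' ->]]] := mul_lpow_ideal lw Bv.
have [_ EsD _] := Es_subspace.
by exists w', (e' + mul e v); rewrite addrA; split=> //; apply/EsD/Es_mulr.
Qed.

End BilinearProducts.

Theorem lemma3p2 (F : fieldType) (hchar : (2%:R : F) != 0)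
  (L : vectType F) (mul : L -> L -> L)
  (mul_linl : forall z (a : F) x y, mul (a *: x + y) z = a *: mul x z + mul y z)
  (mul_linr : forall x (a : F) y z, mul x (a *: y + z) = a *: mul x y + mul x z)
  (leibniz : forall x y z, mul x (mul y z) = mul (mul x y) z - mul (mul x z) y)
  (B : L -> Prop) (hB : is_ideal mul B) (n : nat) (hn : (1 <= n)%N) :
  forall x, rpow mul B n x -> ssum (lpow mul B n) (Es mul B) x.
Proof. by case: n hn => // n _; exact: rpow_sub_lpow_Es. Qed.
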